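(* Let $\mathcal T\in\Sigma^n$ be a text. Then \[\mathtt{st\text{-}pos}^-\subseteq\Big\{\,j\;:\;\text{either } j=1 \text{ or, for the minimum value } i'<j \text{ such that } \mathcal T[i',j-1] \text{ occurs in } \mathcal T[1,j-2],\ \mathcal T[i',j]\text{ does not occur in }\mathcal T[1,j-1]\Big\}.\]
   Context: A text is a string $\mathcal T\in\Sigma^n$ over an integer alphabet whose last symbol $\mathcal T[n]=\$$ occurs only there and is smallest. For $i\ne j$, $\mathrm{rlce}(i,j)$ is the length of the longest common prefix of $\mathcal T[i,n]$ and $\mathcal T[j,n]$. $\mathrm{LPF}[i]=0$ if $i=1$, else $\mathrm{LPF}[i]=\max_{j<i}\mathrm{rlce}(j,i)$ (the longest previous factor array). $\mathtt{st\text{-}pos}^-$ is the set $\{i+\mathrm{LPF}[i]: i\in[n]\}$ (sorted colexicographically by the prefixes $\mathcal T[1,j]$). *)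

(* Strings are seq nat (integer alphabet), positions 1-indexed. *)
From mathcomp Require Import all_boot.
Set Implicit Arguments. Unset Strict Implicit. Unset Printing Implicit Defensive.

Definition sym (T : seq nat) (i : nat) : nat := nth 0 T i.-1.

(* A text: nonempty, last symbol ($) occurs only at position n and is the
   smallest symbol, i.e. every other symbol is strictly larger. *)
Definition is_text (T : seq nat) : Prop :=
  0 < size T /\ forall k, 1 <= k < size T -> sym T (size T) < sym T k.

(* T[a,b] (1-indexed, inclusive); empty if b < a *)
Definition substr (T : seq nat) (a b : nat) : seq nat :=
  take (b.+1 - a) (drop a.-1 T).

Definition occurs (s t : seq nat) : bool := infix s t.

Fixpoint lcp (s t : seq nat) : nat :=
  match s, t with
  | x :: s', y :: t' => if x == y then (lcp s' t').+1 else 0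
  | _, _ => 0
  end.

Definition rlce (T : seq nat) (i j : nat) : nat := lcp (drop i.-1 T) (drop j.-1 T).

Definition LPF (T : seq nat) (i : nat) : nat :=
  if i == 1 then 0 else \max_(1 <= j < i) rlce T j i.

Definition st_pos_minus (T : seq nat) (j : nat) : Prop :=
  exists2 i, 1 <= i <= size T & j = i + LPF T i.

Definition min_prev_occ (T : seq nat) (j i' : nat) : Prop :=
  [/\ 1 <= i' < j,
      occurs (substr T i' j.-1) (substr T 1 (j - 2)) &
      forall k, 1 <= k < i' -> ~~ occurs (substr T k j.-1) (substr T 1 (j - 2))].

From mathcomp Require Import all_boot zify.

Set Implicit Arguments.
Unset Strict Implicit.
Unset Printing Implicit Defensive.

(* Write M = LPF[i] for i > 1 and j = i + M.  A previous factor of length M at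
   some p < i shows that T[i, j-1] already occurs in T[1, j-2], so the minimal
   i' is at most i.  If T[i', j] occurred in T[1, j-1], so would its suffix
   T[i, j], necessarily starting at some p < i, and then rlce(p, i) > M,
   against the maximality of LPF[i].  The unique smallest final symbol gives
   j <= n, so that T[i, j] really has length M + 1. *)

Lemma bigmax_seq_witness (I : eqType) (r : seq I) (F : I -> nat) :
  r != [::] -> exists2 x, x \in r & \max_(y <- r) F y = F x.
Proof.
elim: r => // a [_ _ | b r IH _]; first by exists a; rewrite ?big_seq1 ?mem_seq1.
have [x x_in max_x] := IH isT; rewrite big_cons max_x.
have [le_xa | lt_ax] := leqP (F x) (F a).
  by exists a; [rewrite mem_head | lia].
by exists x; [rewrite in_cons x_in orbT | lia].
Qed.

Lemma prefix_leq_lcp (w s t : seq nat) :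
  prefix w s -> prefix w t -> size w <= lcp s t.
Proof.
elim: w s t => [|x w IH] [|y s] [|z t] //=.
by move=> /andP[/eqP <- ws] /andP[/eqP <- wt]; rewrite eqxx ltnS IH.
Qed.

Lemma lcp_leqr (s t : seq nat) : lcp s t <= size t.
Proof. by elim: s t => [|x s IH] [|y t] //=; case: ifP => // _; apply: IH. Qed.

Lemma take_lcp (s t : seq nat) : take (lcp s t) s = take (lcp s t) t.
Proof. by elim: s t => [|x s IH] [|y t] //=; case: eqP => //= ->; rewrite IH. Qed.

Lemma prefix_take_lcpr (s t : seq nat) : prefix (take (lcp s t) t) s.
Proof. by rewrite -take_lcp prefix_take. Qed.

Lemma infix_takeP (w T : seq nat) m :
  reflect (exists2 p, p + size w <= m & prefix w (drop p T)) (infix w (take m T)).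
Proof.
apply: (iffP (@infixP _ w (take m T))) => [[a [b Tm]] | [p le_pm /prefixP [c Tp]]].
  have /(congr1 size) := Tm; rewrite !size_cat size_take_min => sz.
  exists (size a); first by apply: leq_trans (geq_minl m (size T)); rewrite sz addnA leq_addr.
  by rewrite -(cat_take_drop m T) Tm -!catA drop_size_cat // prefix_prefix.
exists (take p T), (take (m - p - size w) c).
have le_p_m : p <= m := leq_trans (leq_addr _ _) le_pm.
have le_w : size w <= m - p by rewrite leq_subRL.
by rewrite -[in take m T](subnKC le_p_m) takeD Tp take_cat ltnNge le_w.
Qed.

Lemma substr1 (T : seq nat) b : substr T 1 b = take b T.
Proof. by rewrite /substr subn1 drop0. Qed.

Lemma suffix_substr (T : seq nat) a a' b :
  0 < a <= a' -> suffix (substr T a' b) (substr T a b).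
Proof.
move=> /andP[a_gt0 le_aa']; rewrite /substr.
have -> : drop a'.-1 T = drop (a' - a) (drop a.-1 T) by rewrite drop_drop; congr drop; lia.
have [le_ba' | lt_a'b] := leqP b.+1 a'.
  by rewrite (eqP le_ba') take0 suffix0s.
rewrite take_drop (_ : b.+1 - a' + (a' - a) = b.+1 - a); last by lia.
exact: suffix_drop.
Qed.

Lemma rlce_lt_size_suffix (T : seq nat) p i :
  is_text T -> 0 < p < i -> i <= size T -> rlce T p i < size (drop i.-1 T).
Proof.
move=> [_ last_min] /andP[p_gt0 lt_pi] le_iT; rewrite /rlce.
set s := drop p.-1 T; set t := drop i.-1 T.
rewrite ltn_neqAle lcp_leqr andbT; apply/eqP => lcp_full.
have := take_lcp s t; rewrite lcp_full take_size => s_t.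
(* the final symbol of T would reappear at position p + (size T - i) *)
have size_t : size t = (size T - i).+1 by rewrite size_drop; lia.
have := congr1 (nth 0 ^~ (size T - i)) s_t; rewrite nth_take ?size_t // !nth_drop.
have -> : i.-1 + (size T - i) = (size T).-1 by lia.
have -> : p.-1 + (size T - i) = (p + (size T - i)).-1 by lia.
move=> same_sym; have k_range : 1 <= p + (size T - i) < size T by lia.
by have := last_min _ k_range; rewrite /sym same_sym ltnn.
Qed.

Lemma rlce_leq_LPF (T : seq nat) p i : 0 < p < i -> rlce T p i <= LPF T i.
Proof.
move=> /andP[p_gt0 lt_pi]; rewrite /LPF ifN; last by lia.
by apply: leq_bigmax_seq => //; rewrite mem_iota; lia.
Qed.

Lemma LPF_witness (T : seq nat) i : 1 < i -> exists2 p, 0 < p < i & rlce T p i = LPF T i.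
Proof.
move=> i_gt1; rewrite /LPF ifN; last by lia.
have [|p] := @bigmax_seq_witness _ (index_iota 1 i) (rlce T ^~ i).
  by rewrite -size_eq0 size_iota; lia.
by rewrite mem_iota => p_range ->; exists p => //; lia.
Qed.

Lemma add_LPF_leq_size (T : seq nat) i :
  is_text T -> 0 < i <= size T -> i + LPF T i <= size T.
Proof.
move=> text_T /andP[i_gt0 le_iT].
have [-> | i_neq1] := eqVneq i 1; first by rewrite /LPF eqxx; lia.
have i_gt1 : 1 < i by lia.
have [p p_range <-] := LPF_witness T i_gt1.
have := rlce_lt_size_suffix text_T p_range le_iT; rewrite size_drop; lia.
Qed.

Lemma LPF_factor_occurs (T : seq nat) i : 1 < i ->
  occurs (substr T i (i + LPF T i).-1) (substr T 1 (i + LPF T i - 2)).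
Proof.
move=> i_gt1; have [p /andP[p_gt0 lt_pi] rlce_p] := LPF_witness T i_gt1.
rewrite /occurs substr1 /substr; set M := LPF T i.
have -> : (i + M).-1.+1 - i = M by lia.
apply/infix_takeP; exists p.-1; first by rewrite size_take_min; lia.
by rewrite /M -rlce_p; apply: prefix_take_lcpr.
Qed.

Lemma LPF_factor_succ_not_occurs (T : seq nat) i : 0 < i -> i + LPF T i <= size T ->
  ~~ occurs (substr T i (i + LPF T i)) (substr T 1 (i + LPF T i).-1).
Proof.
move=> i_gt0 le_jT; rewrite /occurs substr1 /substr; set M := LPF T i.
have -> : (i + M).+1 - i = M.+1 by lia.
apply/infix_takeP => -[p le_p prefix_p].
have size_w : size (take M.+1 (drop i.-1 T)) = M.+1 by rewrite size_takel // size_drop; lia.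
have p_range : 0 < p.+1 < i by lia.
have := rlce_leq_LPF T p_range; rewrite /rlce /= -/M.
have := prefix_leq_lcp prefix_p (prefix_take _ _); rewrite size_w.
by move=> /leq_trans le_lcp /le_lcp; rewrite ltnn.
Qed.

Theorem corollary47 (T : seq nat) :
  is_text T ->
  forall j, st_pos_minus T j ->
    j = 1 \/
    (forall i', min_prev_occ T j i' ->
       ~~ occurs (substr T i' j) (substr T 1 j.-1)).
Proof.
move=> text_T j [i /andP[i_gt0 le_iT] ->].
have [-> | i_neq1] := eqVneq i 1; [by left; rewrite /LPF eqxx | right].
have i_gt1 : 1 < i by lia.
move=> i' [/andP[i'_gt0 _] _ min_i'].
have le_i'i : i' <= i.
  rewrite leqNgt; apply/negP => lt_ii'.
  have i_range : 1 <= i < i' by lia.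
  by have /negP := min_i' i i_range; apply; apply: LPF_factor_occurs.
apply: contra (LPF_factor_succ_not_occurs i_gt0 (add_LPF_leq_size text_T _)); last lia.
by apply/suffix_infix_trans/suffix_substr; lia.
Qed.
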